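(* Let $G=(V,E)$ be a network, $s,t\in V$, and $B\ge 0$ a CO-weight bound. There is an optimal solution $(\pi_1,\pi_2)$ of the CO-Constrained QoS Max-Survivability problem with bound $B$ such that all its disjoint segments are shortest disjoint segments.
   Context: A network is a directed graph $G=(V,E)$. Each link $e$ has failure probability $p_e\in(0,p_{max}]$ with $p_{max}<1$, and positive weight $w_e$. Paths are identified with link sets. A survivable connection is a pair $(\pi_1,\pi_2)$ of simple $s$–$t$ paths; the two paths may coincide. Its survivability level is $\prod_{e\in\pi_1\cap\pi_2}(1-p_e)$, equal to $1$ if empty. Its CO-weight is $\sum_{e\in\pi_1\cup\pi_2}w_e$. CO-CQMS problem: maximize survivability level subject to CO-weight $\le B$. A survivable connection is viewed as a concatenation of alternating segments: - common segments consist of links common to $\pi_1$ and $\pi_2$; - disjoint segments consist of links exclusive to one of the paths. A disjoint segment with head node $u$ and tail node $v$ is the pair formed by the subpath of $\pi_1$ from $u$ to $v$ and the subpath of $\pi_2$ from $u$ to $v$, which are link-disjoint. The weight of a disjoint segment is the total weight of its links. It is a shortest disjoint segment if its weight is minimum among all pairs of link-disjoint paths from $u$ to $v$ in $G$. *)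

From mathcomp Require Import all_boot all_order all_algebra.
Set Implicit Arguments. Unset Strict Implicit. Unset Printing Implicit Defensive.
Import Order.TTheory GRing.Theory Num.Theory.
Local Open Scope ring_scope.

(* A network: finite vertex type V, finite link type E, each link e goes
   from [src e] to [dst e] (directed, parallel links allowed).
   A path is a sequence of links. *)
Section Network.
Variables (V E : finType) (src dst : E -> V).

Fixpoint walkb (u v : V) (p : seq E) : bool :=
  match p with
  | [::] => u == v
  | e :: p' => (src e == u) && walkb (dst e) v p'
  end.

Definition simple_path (u v : V) (p : seq E) : bool :=
  walkb u v p && uniq (u :: map dst p).

Variable R : realFieldType.

Definition surv_level (pf : E -> R) (pi1 pi2 : seq E) : R :=
  \prod_(e : E | (e \in pi1) && (e \in pi2)) (1 - pf e).

Definition co_weight (w : E -> R) (pi1 pi2 : seq E) : R :=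
  \sum_(e : E | (e \in pi1) || (e \in pi2)) w e.

Definition co_feasible (w : E -> R) (B : R) (s t : V) (pi1 pi2 : seq E) : Prop :=
  [/\ simple_path s t pi1, simple_path s t pi2 & co_weight w pi1 pi2 <= B].

Definition co_optimal (pf w : E -> R) (B : R) (s t : V) (pi1 pi2 : seq E) : Prop :=
  co_feasible w B s t pi1 pi2 /\
  forall rho1 rho2, co_feasible w B s t rho1 rho2 ->
    surv_level pf rho1 rho2 <= surv_level pf pi1 pi2.

(* boundary conditions: the link just before / after a segment (if any) is common *)
Definition prev_common (alpha : seq E) (other : seq E) : bool :=
  if rev alpha is e :: _ then e \in other else true.
Definition next_common (beta : seq E) (other : seq E) : bool :=
  if beta is e :: _ then e \in other else true.

(* (sigma1, sigma2) is a disjoint segment of (pi1, pi2) with head u and tail v: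
   sigma1 is a subpath of pi1 from u to v, sigma2 a subpath of pi2 from u to v,
   sigma1 consists of links exclusive to pi1, sigma2 of links exclusive to pi2,
   and the segment is maximal: in each path it is delimited by common links
   (or by the ends of the path). *)
Definition disjoint_segment (pi1 pi2 sigma1 sigma2 : seq E) (u v : V) : Prop :=
  exists alpha1 beta1 alpha2 beta2,
    [/\ pi1 = alpha1 ++ sigma1 ++ beta1, pi2 = alpha2 ++ sigma2 ++ beta2,
        walkb u v sigma1, walkb u v sigma2 &
        [/\ all (fun e => e \notin pi2) sigma1, all (fun e => e \notin pi1) sigma2,
            prev_common alpha1 pi2 && next_common beta1 pi2 &
            prev_common alpha2 pi1 && next_common beta2 pi1]].

Definition pair_weight (w : E -> R) (sigma1 sigma2 : seq E) : R :=
  \sum_(e <- sigma1) w e + \sum_(e <- sigma2) w e.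

Definition shortest_disjoint (w : E -> R) (u v : V) (sigma1 sigma2 : seq E) : Prop :=
  forall rho1 rho2, simple_path u v rho1 -> simple_path u v rho2 ->
    (forall e, e \in rho1 -> e \notin rho2) ->
    pair_weight w sigma1 sigma2 <= pair_weight w rho1 rho2.

End Network.

(* Take a feasible solution that is lexicographically optimal: maximal survivability
   and, among those, minimal CO-weight; it exists because both values only depend on
   the sets of common and of used links.  Suppose one of its disjoint segments, from u
   to v, is beaten by a lighter pair of link-disjoint u-v paths.  Keep the parts of
   pi1 and pi2 outside the segment, add the lighter pair, and double every link common
   to both outer parts: in this multigraph every s-t cut is crossed by two arcs, so by
   the two-path case of Menger's theorem (an augmenting-walk argument in the residual
   graph) it contains two arc-disjoint s-t walks.  Shortened to simple paths they share
   only links common to pi1 and pi2, and their CO-weight is at most that of the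
   solution minus the segment plus the lighter pair, hence strictly smaller: a
   contradiction. *)

From mathcomp Require Import all_boot all_order all_algebra.
From mathcomp Require Import lra.
From Stdlib Require Import Classical.
Import Order.TTheory GRing.Theory Num.Theory.
Set Implicit Arguments. Unset Strict Implicit. Unset Printing Implicit Defensive.

Lemma split_has_last (T : Type) (P : pred T) s : has P s ->
  exists s1 x s2, [/\ s = s1 ++ x :: s2, P x & ~~ has P s2].
Proof.
rewrite -has_rev -[s in _ -> exists _ _ _, [/\ s = _, _ & _]]revK.
case/split_find=> x s1 s2 Px nh; exists (rev s2), x, (rev s1).
by rewrite rev_cat rev_rcons has_rev.
Qed.

Lemma uniq_cat3_notin (T : eqType) (a s b : seq T) : uniq (a ++ s ++ b) ->
  {in s, forall x, x \notin a ++ b}.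
Proof.
by rewrite uniq_catCA cat_uniq => /and3P[_ /hasPn nab _] x xs; apply: contraL xs => /nab.
Qed.

Section Walks.
Variables (V A : finType) (src dst : A -> V).
Local Notation walk := (walkb src dst).
Local Notation spath := (simple_path src dst).
Implicit Types (x y z : V) (a : A) (p q : seq A) (S : {set V}).

Definition leaves S a := (src a \in S) && (dst a \notin S).

Lemma walk_cat x y z p q : walk x y p -> walk y z q -> walk x z (p ++ q).
Proof. by elim: p x => [|a p IH] x /=; [move/eqP->|case/andP=> -> /IH]. Qed.

Lemma walk_split x z p q : walk x z (p ++ q) -> exists y, walk x y p /\ walk y z q.
Proof.
elim: p x => [|a p IH] x /=; first by exists x; rewrite eqxx.
by case/andP=> /eqP-> /IH[y [wp wq]]; exists y; rewrite eqxx wp.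
Qed.

Lemma walk_last x y p : walk x y p -> y = last x (map dst p).
Proof. by elim: p x => [|a p IH] x /=; [move/eqP|case/andP=> _ /IH]. Qed.

Lemma walk_ends x y x' y' p : p != [::] -> walk x y p -> walk x' y' p ->
  x = x' /\ y = y'.
Proof.
case: p => [//|a p] _ w w'; split; last by rewrite (walk_last w) (walk_last w').
by case/andP: w => /eqP <- _; case/andP: w' => /eqP.
Qed.

Lemma segment_walks x y p1 q p2 u v : walk x y (p1 ++ q ++ p2) -> walk u v q -> q != [::] ->
  walk x u p1 /\ walk v y p2.
Proof.
move=> /walk_split[z1 [wp1 /walk_split[z2 [wq wp2]]]] wuv nq.
by have [ez1 ez2] := walk_ends nq wq wuv; subst.
Qed.

Lemma simple_path_infix x y p1 q p2 u v : spath x y (p1 ++ q ++ p2) -> walk u v q -> spath u v q.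
Proof.
move=> sp wq; rewrite /simple_path wq /=; have [->|nq] := eqVneq q [::]; first by [].
have [/walk_last up1 _] := segment_walks (andP sp).1 wq nq.
case/andP: sp => _; rewrite !map_cat -cat_cons !cat_uniq => /and3P[_ /hasPn dis /and3P[-> _ _]].
rewrite andbT; apply: contraL (mem_last x (map dst p1)) => uq.
by rewrite -up1; apply: dis; rewrite mem_cat uq.
Qed.

Lemma simple_path_uniq x y p : spath x y p -> uniq p.
Proof. by case/andP=> _ /= /andP[_ /map_uniq]. Qed.

Lemma simple_path_loop x p : spath x x p -> p = [::].
Proof.
case: p => [//|a p] /andP[/walk_last ex /andP[]].
by rewrite {1}ex /= mem_last.
Qed.

Lemma simple_path_drop x y p a q : spath x y (p ++ a :: q) -> spath (dst a) y q.
Proof.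
case/andP=> /walk_split[z [_ /= /andP[_ wq]]].
by rewrite /simple_path wq map_cat /= cat_uniq => /andP[_ /and3P[]].
Qed.

Lemma walk_shorten x y p : walk x y p -> exists2 p', spath x y p' & {subset p' <= p}.
Proof.
elim: p x => [|a p IH] x /=.
  by move=> exy; exists [::]; rewrite // /simple_path /= exy.
case/andP=> /eqP ax /IH[p' sp' sub_p'].
have [|x_fresh] := boolP (x \in dst a :: map dst p'); last first.
  exists (a :: p'); last by move=> b; rewrite !inE => /orP[->|/sub_p'->]; rewrite ?orbT.
  by case/andP: sp' => wp' up'; rewrite /simple_path /= ax eqxx wp' x_fresh.
rewrite inE => /predU1P[->|/mapP[b]]; first by exists p' => // b /sub_p'; rewrite inE orbC => ->.
move=> b_p' ->; case/splitPr: b_p' sp' sub_p' => p1 p2 sp' sub_p'.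
exists p2; first exact: simple_path_drop sp'.
by move=> c c_p2; rewrite inE sub_p' ?orbT // mem_cat inE c_p2 !orbT.
Qed.

Lemma walk_exit S x y p : walk x y p -> x \in S -> y \notin S ->
  exists2 a, a \in p & leaves S a.
Proof.
elim: p x => [|a p IH] x /=; first by move/eqP->; move=> ->.
case/andP=> /eqP ax wp xS yS; have [aS|aS] := boolP (dst a \in S).
  by have [b bp lb] := IH _ wp aS yS; exists b; rewrite // inE bp orbT.
by exists a; rewrite ?inE ?eqxx // /leaves ax xS.
Qed.

Lemma walk_enter S x y p b : walk x y p -> x \notin S -> b \in p -> src b \in S ->
  exists2 a, a \in p & leaves (~: S) a.
Proof.
move=> wp xS bp bS; case/splitPr: bp wp => p1 p2 wp.
have [z [wp1 /= /andP[/eqP zb _]]] := walk_split wp.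
have [||a ap1 la] := walk_exit (S := ~: S) wp1; rewrite ?inE -?zb ?bS //.
by exists a; rewrite // mem_cat ap1.
Qed.

Lemma walk_reenter S x y p b1 b2 : walk x y p -> b1 != b2 -> b1 \in p -> b2 \in p ->
  leaves S b1 -> leaves S b2 -> exists2 a, a \in p & leaves (~: S) a.
Proof.
move=> wp b12 b1p b2p /andP[s1 d1] /andP[s2 d2].
suff [p1 [b [b' [p2 [ep lb b'p2 b'S]]]]] : exists p1 b b' p2,
    [/\ p = p1 ++ b :: p2, dst b \notin S, b' \in p2 & src b' \in S].
  move: wp; rewrite ep => /walk_split[z [_ /= /andP[_ wp2]]].
  by have [a ap2 la] := walk_enter wp2 lb b'p2 b'S; exists a; rewrite // mem_cat inE ap2 !orbT.
case/splitPr: b1p => p1 p2 in b2p *.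
rewrite mem_cat inE in b2p; case/orP: b2p => [|/predU1P[eb|b2p2]].
- case/splitPr=> p11 p12; exists p11, b2, b1, (p12 ++ b1 :: p2).
  by split; rewrite // -?catA // mem_cat inE eqxx orbT.
- by rewrite eb eqxx in b12.
- by exists p1, b1, b2, p2.
Qed.
End Walks.

Lemma walk_map (V A B : finType) (src dst : A -> V) (f : B -> A) x y p :
  walkb (src \o f) (dst \o f) x y p = walkb src dst x y (map f p).
Proof. by elim: p x => //= b p IH x; rewrite IH. Qed.

Section ResidualGraph.
Variables (V A : finType) (src dst : A -> V).
Local Notation walk := (walkb src dst).
Implicit Types (x y z : V) (a : A) (p P : seq A) (c : A * bool) (q Q : seq (A * bool)).

(* A residual arc [(a, true)] traverses [a] forwards and [(a, false)] backwards; relative to a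
   path [P], arcs off [P] may only be used forwards and arcs on [P] only backwards. *)
Definition rsrc c := if c.2 then src c.1 else dst c.1.
Definition rdst c := if c.2 then dst c.1 else src c.1.
Arguments rsrc c /.
Arguments rdst c /.
Local Notation rwalk := (walkb rsrc rdst).

Definition residual P c := c.2 == (c.1 \notin P).
Definition forward p := [seq (a, true) | a <- p].
Definition nback q := count (predC snd) q.

Lemma fst_forward p : map fst (forward p) = p.
Proof. by elim: p => //= a p ->. Qed.

Lemma walk_forward x y p : walk x y p -> rwalk x y (forward p).
Proof. by elim: p x => [|a p IH] x //= /andP[-> /IH]. Qed.

Lemma rwalk_fst x y q : all snd q -> rwalk x y q -> walk x y (map fst q).
Proof. by elim: q x => [|[a b] q IH] x //= /andP[/= -> fq] /andP[-> /IH->]. Qed.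

Lemma residual_uniq_fst P q : all (residual P) q -> uniq q -> uniq (map fst q).
Proof.
move=> /allP resq uq; rewrite map_inj_in_uniq // => -[a b] [a' b'].
by move=> /resq/eqP/= -> /resq/eqP/= -> /= ->.
Qed.

Definition residual_rel P : rel V :=
  fun x y => [exists c, [&& residual P c, rsrc c == x & rdst c == y]].

Lemma connect_residual P x y : connect (residual_rel P) x y ->
  exists2 q, rwalk x y q & all (residual P) q.
Proof.
case/connectP=> vs + ->; elim: vs x => [|z vs IH] x /=; first by exists [::]; rewrite /= ?eqxx.
case/andP=> /existsP[c /and3P[rc /eqP cx /eqP cz]] /IH[q wq rq].
by exists (c :: q); [apply/andP; rewrite cx cz | apply/andP].
Qed.

Lemma connect_residual_arc P x c : connect (residual_rel P) x (rsrc c) -> residual P c ->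
  connect (residual_rel P) x (rdst c).
Proof.
move=> xc rc; apply: connect_trans xc (connect1 _).
by apply/existsP; exists c; rewrite rc !eqxx.
Qed.

(* Cut [q] after its last arc on a link of [p], and reach that point along [p] instead. *)
Lemma rejoin x y z p q : walk x y p -> rwalk y z q -> {in q, forall c, c.1 \in p -> ~~ c.2} ->
  exists p1 p2 q1 q2, [/\ p = p1 ++ p2, q = q1 ++ q2, rwalk x z (forward p1 ++ q2)
                        & ~~ has (fun c => c.1 \in p) q2].
Proof.
move=> wp wq backq; have [|nhas] := boolP (has (fun c => c.1 \in p) q); last first.
  by exists p, [::], [::], q; rewrite cats0 (walk_cat (walk_forward wp) wq).
case/split_has_last=> q1 [[a b] [q2 [eq /= ap nhas]]].
have b_false : b = false.
  by apply/negbTE/(backq (a, b)); rewrite // eq mem_cat inE eqxx orbT.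
subst b; move: wq; rewrite eq => /walk_split[_ [_ /= /andP[_ wq2]]].
case/splitPr: ap wp nhas => p1 p2 /walk_split[w' [wp1 /= /andP[/eqP aw' _]]] nhas.
exists p1, (a :: p2), (rcons q1 (a, false)), q2; split => //; first by rewrite cat_rcons.
by apply: walk_cat (walk_forward wp1) _; rewrite -aw'.
Qed.

Definition augmenting_pair x y P Q :=
  [/\ walk x y P, uniq P, rwalk x y Q, all (residual P) Q & uniq (map fst Q)].

Lemma augmenting_pair_forward x y P Q : augmenting_pair x y P Q -> all snd Q ->
  walk x y (map fst Q) /\ {in P, forall a, a \notin map fst Q}.
Proof.
case=> _ _ wQ /allP rQ _ fQ; split; first exact: rwalk_fst fQ wQ.
move=> a aP; apply/mapP=> -[c cQ ea]; have /eqP := rQ c cQ.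
by rewrite (allP fQ c cQ) -ea aP.
Qed.

(* The first backward arc [(e, false)] of an augmenting walk splits [P = a ++ e :: b] and
   [Q = q1 ++ (e, false) :: q2]: the forward part [q1] followed by [b] is a new path, and
   [q2] rejoined with a prefix of [a] is an augmenting walk for it with fewer backward arcs. *)
Section AugmentingStep.
Variables (x y : V) (a b : seq A) (e : A) (q1 q2 : seq (A * bool)).
Hypotheses (wP : walk x y (a ++ e :: b)) (uP : uniq (a ++ e :: b))
  (wQ : rwalk x y (q1 ++ (e, false) :: q2)) (fq1 : all snd q1)
  (rq1 : all (residual (a ++ e :: b)) q1) (rq2 : all (residual (a ++ e :: b)) q2)
  (uQ : uniq (map fst (q1 ++ (e, false) :: q2))).

Lemma forward_prefix_off_path : {in map fst q1, forall h, h \notin a ++ e :: b}.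
Proof.
by move=> h /mapP[c cq1 ->]; have /eqP <- := allP rq1 c cq1; apply: (allP fq1).
Qed.

Lemma augmented_path : walk x y (map fst q1 ++ b) && uniq (map fst q1 ++ b).
Proof.
have [z [wq1 /= /andP[/eqP ez _]]] := walk_split wQ.
have [_ [_ /= /andP[_ wb]]] := walk_split wP; rewrite -ez in wq1.
rewrite (walk_cat (rwalk_fst fq1 wq1) wb) cat_uniq.
move: uQ uP; rewrite map_cat !cat_uniq !cons_uniq => /andP[uq1 _] /and3P[_ _ /andP[_ ub]].
rewrite uq1 ub andbT; apply/hasPn => h hb; apply: contraL hb => /forward_prefix_off_path.
by rewrite mem_cat inE negb_or => /andP[_ /norP[]].
Qed.

Lemma augmented_residual_walk : exists2 Q', nback Q' <= nback q2 &
  [/\ rwalk x y Q', all (residual (map fst q1 ++ b)) Q' & uniq (map fst Q')].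
Proof.
have [_ [_ /= /andP[_ wq2]]] := walk_split wQ.
have [z [wa /= /andP[/eqP ez _]]] := walk_split wP; rewrite ez in wq2.
move: uQ; rewrite map_cat /= cat_uniq cons_uniq => /and3P[_ /hasPn q2q1 /andP[eq2 uq2]].
move: uP; rewrite cat_uniq cons_uniq => /and3P[ua /hasPn ba _].
have backq2 : {in q2, forall c, c.1 \in a -> ~~ c.2}.
  by move=> c cq2 ca; have /eqP -> := allP rq2 c cq2; rewrite negbK mem_cat ca.
have [a1 [a2 [q21 [q0 [ea eq wQ' nha]]]]] := rejoin wa wq2 backq2.
have q0a : {in map fst q0, forall h, [/\ h \notin a, h != e & h \notin map fst q1]}.
  move=> h /mapP[c cq0 ->]; split.
  - by apply: contra nha => ca; apply/hasP; exists c.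
  - by apply: contraNneq eq2 => <-; rewrite eq map_cat mem_cat (map_f _ cq0) orbT.
  - by apply: q2q1; rewrite inE eq map_cat mem_cat (map_f _ cq0) !orbT.
exists (forward a1 ++ q0).
  have nb0 : count (predC snd) (forward a1) = 0 by elim: (a1).
  by rewrite /nback count_cat nb0 eq count_cat leq_addl.
split=> //.
- rewrite all_cat; apply/andP; split.
    apply/allP => _ /mapP[h ha1 ->]; rewrite /residual /= eq_sym eqb_id.
    have ha : h \in a by rewrite ea mem_cat ha1.
    rewrite mem_cat negb_or; apply/andP; split.
      by apply: contraL ha => /forward_prefix_off_path; rewrite mem_cat negb_or => /andP[].
    by apply: contraL ha => hb; apply: ba; rewrite inE hb orbT.
  apply/allP => c cq0; have /q0a[ca ce cq1] : c.1 \in map fst q0 by exact: map_f.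
  have cq2 : c \in q2 by rewrite eq mem_cat cq0 orbT.
  rewrite /residual; have /eqP -> := allP rq2 c cq2.
  by rewrite !mem_cat inE (negbTE ca) (negbTE ce) (negbTE cq1).
- rewrite map_cat fst_forward cat_uniq; apply/and3P; split.
  + by move: ua; rewrite ea cat_uniq => /andP[].
  + by apply/hasPn => h /q0a[ca _ _]; apply: contra ca; rewrite ea mem_cat => ->.
  + by move: uq2; rewrite eq map_cat cat_uniq => /and3P[].
Qed.
End AugmentingStep.

Lemma augment x y P Q : augmenting_pair x y P Q -> ~~ all snd Q ->
  exists P' Q', augmenting_pair x y P' Q' /\ nback Q' < nback Q.
Proof.
case=> wP uP wQ rQ uQ; rewrite -has_predC => hQ; move: wQ rQ uQ.
case: {hQ}(split_find hQ) => -[e []] // q1 q2 _.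
rewrite has_predC negbK cat_rcons all_cat /= => fq1 wQ /and3P[rq1 eP rq2] uQ.
move: eP; rewrite /residual /= eq_sym eqbF_neg negbK => eP.
case/splitPr: eP wP uP rq1 rq2 => a b wP uP rq1 rq2.
have /andP[wP' uP'] := augmented_path wP uP wQ fq1 rq1 uQ.
have [Q' nbQ' [wQ' rQ' uQ']] := augmented_residual_walk wP uP wQ fq1 rq1 rq2 uQ.
exists (map fst q1 ++ b), Q'; split => //.
rewrite /nback count_cat /= addnCA add1n ltnS.
exact: leq_trans nbQ' (leq_addl _ _).
Qed.

Lemma augmenting_pair_disjoint_walks x y P Q : augmenting_pair x y P Q ->
  exists p1 p2, [/\ walk x y p1, walk x y p2 & {in p1, forall a, a \notin p2}].
Proof.
elim: {Q}(nback Q).+1 {-2}Q (ltnSn (nback Q)) P => // n IH Q ltQ P augPQ.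
have [fQ|nfQ] := boolP (all snd Q); last first.
  have [P' [Q' [augPQ' ltQ']]] := augment augPQ nfQ.
  exact: IH Q' (leq_trans ltQ' ltQ) P' augPQ'.
have [wQ disjPQ] := augmenting_pair_forward augPQ fQ.
by exists P, (map fst Q); case: augPQ.
Qed.
End ResidualGraph.

Section TwoArcDisjointWalks.
Variables (V A : finType) (src dst : A -> V) (s t : V).
Local Notation walk := (walkb src dst).
Local Notation rwalk := (walkb (rsrc src dst) (rdst src dst)).
Hypothesis two_exits : forall S : {set V}, s \in S -> t \notin S ->
  exists a1 a2, [/\ a1 != a2, leaves src dst S a1 & leaves src dst S a2].

(* If [t] is not reachable in the residual graph, the two arcs leaving the reachable set lie
   on [P]; so [P] re-enters that set, and the backward copy of the re-entering arc would
   extend it. *)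
Lemma augmenting_walk P : P = [::] \/ walk s t P ->
  exists2 Q, rwalk s t Q & all (residual P) Q && uniq (map fst Q).
Proof.
move=> hP; pose S := [set x | connect (residual_rel src dst P) s x].
have [|tS] := boolP (t \in S).
  rewrite inE => /connect_residual[q wq rq].
  have [Q sQ subQ] := walk_shorten wq; have uQ := simple_path_uniq sQ.
  have rQ : all (residual P) Q by apply/allP => c /subQ; apply: (allP rq).
  by exists Q; [case/andP: sQ | rewrite rQ (residual_uniq_fst rQ uQ)].
have exits a : leaves src dst S a -> a \in P.
  case/andP; rewrite !inE => aS; apply: contraNT => aP.
  by apply: (connect_residual_arc (c := (a, true))); rewrite /residual ?aP.
have enters a : leaves src dst (~: S) a -> a \notin P.
  case/andP; rewrite !inE negbK => aS dS; apply: contra aS => aP.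
  by apply: (connect_residual_arc (c := (a, false))); rewrite /residual /= ?aP.
have [|a1 [a2 [a12 l1 l2]]] := two_exits _ tS; first by rewrite inE connect0.
case: hP => [P0|wP]; first by have := exits _ l1; rewrite P0.
have [f fP lf] := walk_reenter wP a12 (exits _ l1) (exits _ l2) l1 l2.
by have := enters _ lf; rewrite fP.
Qed.

Theorem two_arc_disjoint_walks :
  exists p1 p2, [/\ walk s t p1, walk s t p2 & {in p1, forall a, a \notin p2}].
Proof.
have [Q0 wQ0 /andP[rQ0 uP]] := augmenting_walk (or_introl erefl).
have fQ0 : all snd Q0 by apply/allP => c /(allP rQ0)/eqP ->.
have wP := rwalk_fst fQ0 wQ0.
have [Q wQ /andP[rQ uQ]] := augmenting_walk (or_intror wP).
exact: augmenting_pair_disjoint_walks (And5 wP uP wQ rQ uQ).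
Qed.
End TwoArcDisjointWalks.

Section Rerouting.
Variables (V E : finType) (src dst : E -> V) (s t u v : V) (a1 a2 r1 r2 b1 b2 : seq E).
Local Notation walk := (walkb src dst).
Hypotheses (wa1 : walk s u a1) (wa2 : walk s u a2) (wr1 : walk u v r1) (wr2 : walk u v r2)
  (wb1 : walk v t b1) (wb2 : walk v t b2) (r12 : {in r1, forall e, e \notin r2}).

Definition reroute_links := a1 ++ b1 ++ a2 ++ b2 ++ r1 ++ r2.
Definition shared_links e := (e \in a1 ++ b1) && (e \in a2 ++ b2).

(* Every link of [reroute_links] once, plus a second copy of each shared link: a link by which
   both outer walks leave a cut still yields two distinct arcs leaving it. *)
Definition doubled_arc := {x : E * bool | if x.2 then x.1 \in reroute_links else shared_links x.1}.
Definition link_of (x : doubled_arc) := (val x).1.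
Local Notation dleaves := (leaves (src \o link_of) (dst \o link_of)).

Lemma pair_exits (S : {set V}) x y p q : walk x y p -> walk x y q -> x \in S -> y \notin S ->
  {subset p <= reroute_links} -> {subset q <= reroute_links} ->
  {in p, forall e, e \in q -> shared_links e} ->
  exists d1 d2, [/\ d1 != d2, dleaves S d1 & dleaves S d2].
Proof.
move=> wp wq xS yS pL qL pq_shared.
have [f1 f1p l1] := walk_exit wp xS yS; have [f2 f2q l2] := walk_exit wq xS yS.
have [ef|f12] := eqVneq f1 f2.
  rewrite -ef in f2q; exists (Sub (f1, true) (pL _ f1p)), (Sub (f1, false) (pq_shared _ f1p f2q)).
  by split=> //; apply/eqP => /(congr1 (fun d => (val d).2)).
exists (Sub (f1, true) (pL _ f1p)), (Sub (f2, true) (qL _ f2q)); split=> //.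
by apply/eqP => /(congr1 link_of); rewrite /link_of !SubK /= => ef; rewrite ef eqxx in f12.
Qed.

Lemma doubled_exits (S : {set V}) : s \in S -> t \notin S ->
  exists d1 d2, [/\ d1 != d2, dleaves S d1 & dleaves S d2].
Proof.
move=> sS tS; have [uS|uS] := boolP (u \in S); first have [vS|vS] := boolP (v \in S).
- apply: (pair_exits wb1 wb2) => // e he;
    by rewrite /shared_links /reroute_links !mem_cat he ?orbT // => ->; rewrite orbT.
- apply: (pair_exits wr1 wr2) => // e he; rewrite /reroute_links ?mem_cat ?he ?orbT //.
  by rewrite (negbTE (r12 he)).
- apply: (pair_exits wa1 wa2) => // e he;
    by rewrite /shared_links /reroute_links !mem_cat he ?orbT // => ->.
Qed.

Lemma doubled_arc_link (d : doubled_arc) : link_of d \in reroute_links.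
Proof.
case: d => -[e []]; rewrite /link_of //= => /andP[+ _]; rewrite /reroute_links !mem_cat.
by case/orP=> ->; rewrite ?orbT.
Qed.

Lemma reroute : exists P1 P2, [/\ simple_path src dst s t P1, simple_path src dst s t P2,
  {subset P1 ++ P2 <= reroute_links} & {in P1, forall e, e \in P2 -> shared_links e}].
Proof.
have [p1 [p2 [+ + p12]]] := two_arc_disjoint_walks doubled_exits.
rewrite walk_map => w1; rewrite walk_map => w2.
have [P1 sP1 sub1] := walk_shorten w1; have [P2 sP2 sub2] := walk_shorten w2.
exists P1, P2; split => //.
  by move=> e; rewrite mem_cat => /orP[/sub1|/sub2] /mapP[d _ ->]; apply: doubled_arc_link.
move=> e /sub1/mapP[d1 d1p1 ->] /sub2/mapP[d2 d2p2 e12].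
have : d1 != d2 by apply: contraNneq (p12 _ d1p1) => ->.
case: d1 d2 e12 {d1p1 d2p2} => -[e1 b1'] h1 [[e2 b2'] h2]; rewrite /link_of /= => e12; subst e2.
by case: b1' b2' h1 h2 => [] [] //= h1 h2; rewrite -val_eqE /= eqxx.
Qed.
End Rerouting.

Local Open Scope ring_scope.

Section Weights.
Variables (E : finType) (R : realFieldType) (w : E -> R).
Hypothesis w_ge0 : forall e, 0 <= w e.

Lemma pair_weight_ge0 p q : 0 <= pair_weight w p q.
Proof. by rewrite addr_ge0 // sumr_ge0. Qed.

Lemma co_weight_le_sum (p1 p2 l : seq E) : {subset p1 ++ p2 <= l} ->
  co_weight w p1 p2 <= \sum_(e in l) w e.
Proof.
move=> sub; rewrite /co_weight [X in _ <= X]big_mkcond [X in X <= _]big_mkcond.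
apply: ler_sum => e _; case: ifP => [e12|_]; first by rewrite sub // mem_cat.
by case: ifP.
Qed.

Lemma rerouted_weight_bound (a1 sg1 b1 a2 sg2 b2 r1 r2 : seq E) :
  uniq (a1 ++ sg1 ++ b1) -> uniq (a2 ++ sg2 ++ b2) ->
  {in sg1, forall e, e \notin a2 ++ sg2 ++ b2} -> {in sg2, forall e, e \notin a1 ++ sg1 ++ b1} ->
  \sum_(e in a1 ++ b1 ++ a2 ++ b2 ++ r1 ++ r2) w e + \sum_(e in sg1) w e + \sum_(e in sg2) w e
  <= co_weight w (a1 ++ sg1 ++ b1) (a2 ++ sg2 ++ b2) + \sum_(e in r1) w e + \sum_(e in r2) w e.
Proof.
move=> u1 u2 x1 x2; rewrite /co_weight.
rewrite [\sum_(e in a1 ++ _) _]big_mkcond [\sum_(e in sg1) _]big_mkcond.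
rewrite [\sum_(e in sg2) _]big_mkcond [\sum_(e in r1) _]big_mkcond [\sum_(e in r2) _]big_mkcond.
rewrite [\sum_(e | _ || _) _]big_mkcond -!big_split /=.
apply: ler_sum => e _; have := w_ge0 e; rewrite !mem_cat.
have [e1|ne1] := boolP (e \in sg1).
  have := uniq_cat3_notin u1 e1; have := x1 _ e1; rewrite !mem_cat.
  move=> /norP[/negbTE-> /norP[/negbTE-> /negbTE->]] /norP[/negbTE-> /negbTE->].
  by case: (e \in r1); case: (e \in r2) => /=; lra.
have [e2|ne2] := boolP (e \in sg2).
  have := uniq_cat3_notin u2 e2; have := x2 _ e2; rewrite !mem_cat.
  move=> /norP[/negbTE-> /norP[_ /negbTE->]] /norP[/negbTE-> /negbTE->].
  by case: (e \in r1); case: (e \in r2) => /=; lra.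
by case: (e \in a1); case: (e \in b1); case: (e \in a2); case: (e \in b2);
   case: (e \in r1); case: (e \in r2) => /=; lra.
Qed.
End Weights.

Lemma reroute_non_shortest_segment (V E : finType) (src dst : E -> V) (R : realFieldType)
    (w : E -> R) s t pi1 pi2 sg1 sg2 u v r1 r2 : (forall e, 0 <= w e) ->
  simple_path src dst s t pi1 -> simple_path src dst s t pi2 ->
  disjoint_segment src dst pi1 pi2 sg1 sg2 u v ->
  simple_path src dst u v r1 -> simple_path src dst u v r2 -> {in r1, forall e, e \notin r2} ->
  pair_weight w r1 r2 < pair_weight w sg1 sg2 ->
  exists P1 P2, [/\ simple_path src dst s t P1, simple_path src dst s t P2,
    {in P1, forall e, e \in P2 -> (e \in pi1) && (e \in pi2)}
  & co_weight w P1 P2 < co_weight w pi1 pi2].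
Proof.
move=> w0 sp1 sp2 [a1 [b1 [a2 [b2 [ep1 ep2 ws1 ws2 [x1 x2 _ _]]]]]] sr1 sr2 r12 lt_rs.
subst pi1 pi2.
have nuv : u != v.
  apply/eqP => euv; subst v; move: lt_rs.
  rewrite (simple_path_loop (simple_path_infix sp1 ws1)).
  rewrite (simple_path_loop (simple_path_infix sp2 ws2)).
  by rewrite {2}/pair_weight !big_nil addr0 ltNge (pair_weight_ge0 w0).
have [ns1 ns2] : sg1 != [::] /\ sg2 != [::].
  by split; apply: contraNneq nuv => sg0; [move: ws1 | move: ws2]; rewrite sg0.
have u1 := simple_path_uniq sp1; have u2 := simple_path_uniq sp2.
have [wa1 wb1] := segment_walks (andP sp1).1 ws1 ns1.
have [wa2 wb2] := segment_walks (andP sp2).1 ws2 ns2.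
have [P1 [P2 [sP1 sP2 subP shared]]] := reroute wa1 wa2 (andP sr1).1 (andP sr2).1 wb1 wb2 r12.
exists P1, P2; split => //.
  move=> e e1 e2; case/andP: (shared _ e1 e2); rewrite !mem_cat.
  by case/orP=> -> /orP[]->; rewrite ?orbT.
apply: le_lt_trans (co_weight_le_sum w0 subP) _.
have := rerouted_weight_bound w0 r1 r2 u1 u2 (allP x1) (allP x2).
have us1 : uniq sg1 by move: u1; rewrite uniq_catCA cat_uniq => /andP[].
have us2 : uniq sg2 by move: u2; rewrite uniq_catCA cat_uniq => /andP[].
move: lt_rs; rewrite /pair_weight !big_uniq ?(simple_path_uniq sr1) ?(simple_path_uniq sr2) //.
rewrite /reroute_links; lra.
Qed.

Lemma surv_level_le (E : finType) (R : realFieldType) (pf : E -> R) (pi1 pi2 P1 P2 : seq E) :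
  (forall e, 0 <= pf e <= 1) -> {in P1, forall e, e \in P2 -> (e \in pi1) && (e \in pi2)} ->
  surv_level pf pi1 pi2 <= surv_level pf P1 P2.
Proof.
move=> pf01 sub; rewrite /surv_level [X in X <= _]big_mkcond [X in _ <= X]big_mkcond /=.
apply: ler_prod => e _; have /andP[p0 p1] := pf01 e.
have [/andP[e1 e2]|_] := boolP ((e \in P1) && (e \in P2)).
  by rewrite sub // lexx andbT subr_ge0.
by case: ifP => _; apply/andP; split; lra.
Qed.

Definition lex_better (T : Type) (R : numDomainType) (f g : T -> R) : rel T :=
  fun x y => (f y < f x) || ((f x == f y) && (g x < g y)).

Lemma lex_better_irr (T : Type) (R : numDomainType) (f g : T -> R) :
  irreflexive (lex_better f g).
Proof. by move=> x; rewrite /lex_better !ltxx andbF. Qed.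

Lemma lex_better_trans (T : Type) (R : numDomainType) (f g : T -> R) :
  transitive (lex_better f g).
Proof.
move=> y x z /orP[fyx|/andP[/eqP fxy gxy]] /orP[fzy|/andP[/eqP fyz gyz]]; apply/orP.
- by left; apply: lt_trans fyx.
- by left; rewrite -fyz.
- by left; rewrite fxy.
- by right; rewrite fxy fyz eqxx (lt_trans gxy gyz).
Qed.

Lemma exists_undominated (X : Type) (T : finType) (lt : rel T) (key : X -> T) (P : X -> Prop) :
  irreflexive lt -> transitive lt -> (exists x, P x) ->
  exists2 x, P x & forall y, P y -> ~~ lt (key y) (key x).
Proof.
move=> irr tr [x0 Px0]; pose dom x := [set k | lt k (key x)].
suff ind n x : (#|dom x| < n)%N -> P x ->
    exists2 x, P x & forall y, P y -> ~~ lt (key y) (key x).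
  exact: ind _ x0 (ltnSn _) Px0.
elim: n x => [//|n IH] x ltn Px.
case: (classic (exists2 y, P y & lt (key y) (key x))) => [[y Py yx]|nodom]; last first.
  by exists x => // y Py; apply/negP => yx; apply: nodom; exists y.
have dom_yx : (#|dom y| < #|dom x|)%N.
  apply/proper_card/properP; split; first by apply/subsetP => k; rewrite !inE => /tr; apply.
  by exists (key y); rewrite !inE ?yx ?irr.
exact: IH y (leq_trans dom_yx ltn) Py.
Qed.

Lemma exists_lex_optimal (V E : finType) (src dst : E -> V) (R : realFieldType)
    (pf w : E -> R) (B : R) (s t : V) :
  (exists pi1 pi2, co_feasible src dst w B s t pi1 pi2) ->
  exists q1 q2, [/\ co_feasible src dst w B s t q1 q2,
    forall r1 r2, co_feasible src dst w B s t r1 r2 -> surv_level pf r1 r2 <= surv_level pf q1 q2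
  & forall r1 r2, co_feasible src dst w B s t r1 r2 ->
      surv_level pf r1 r2 = surv_level pf q1 q2 -> co_weight w q1 q2 <= co_weight w r1 r2].
Proof.
move=> [p1 [p2 fp]].
pose key (p : seq E * seq E) : {set E} * {set E} :=
  ([set e | (e \in p.1) && (e \in p.2)], [set e | (e \in p.1) || (e \in p.2)]).
pose surv (K : {set E} * {set E}) := \prod_(e in K.1) (1 - pf e).
pose cost (K : {set E} * {set E}) := \sum_(e in K.2) w e.
have survE r1 r2 : surv_level pf r1 r2 = surv (key (r1, r2)).
  by apply: eq_bigl => e; rewrite inE.
have costE r1 r2 : co_weight w r1 r2 = cost (key (r1, r2)).
  by apply: eq_bigl => e; rewrite inE.
have [[q1 q2] /= fq best] := exists_undominated key (@lex_better_irr _ _ surv cost)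
  (@lex_better_trans _ _ surv cost)
  (ex_intro (fun p => co_feasible src dst w B s t p.1 p.2) (p1, p2) fp).
exists q1, q2; split=> // r1 r2 fr; have := best (r1, r2) fr.
  by rewrite /lex_better negb_or -leNgt -!survE => /andP[].
rewrite /lex_better negb_or -!survE -!costE => /andP[_ not_cheaper] eq_surv.
by move: not_cheaper; rewrite eq_surv eqxx -leNgt.
Qed.

Theorem lemma6 (V E : finType) (src dst : E -> V) (R : realFieldType)
  (pf w : E -> R) (pmax : R) (s t : V) (B : R)
  (hp : forall e, 0 < pf e <= pmax) (hpmax : pmax < 1)
  (hw : forall e, 0 < w e) (hB : 0 <= B)
  (hfeas : exists pi1 pi2, co_feasible src dst w B s t pi1 pi2) :
  exists pi1 pi2,
    co_optimal src dst pf w B s t pi1 pi2 /\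
    forall sigma1 sigma2 u v, disjoint_segment src dst pi1 pi2 sigma1 sigma2 u v ->
      shortest_disjoint src dst w u v sigma1 sigma2.
Proof.
have [q1 [q2 [fq max_surv min_cost]]] := exists_lex_optimal pf hfeas.
exists q1, q2; split=> // sg1 sg2 u v seg r1 r2 sr1 sr2 r12.
rewrite leNgt; apply/negP => lt_rs; case: (fq) => sq1 sq2 qB.
have [P1 [P2 [sP1 sP2 common lt_cost]]] :=
  reroute_non_shortest_segment (fun e => ltW (hw e)) sq1 sq2 seg sr1 sr2 r12 lt_rs.
have fP : co_feasible src dst w B s t P1 P2 by split=> //; apply: le_trans (ltW lt_cost) qB.
have pf01 e : 0 <= pf e <= 1 by case/andP: (hp e) => *; apply/andP; split; lra.
have eq_surv : surv_level pf P1 P2 = surv_level pf q1 q2.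
  by apply/le_anti; rewrite max_surv // surv_level_le.
by move: (min_cost _ _ fP eq_surv); rewrite leNgt lt_cost.
Qed.
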